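(* Let $X$ and $Y$ be real Banach spaces and $\mathcal{D}$ a closed subspace of $F_Y(X)$. Then $L(F_Y(X)/\mathcal{D},Y)$ is linearly isometrically isomorphic to ${}^{\diamondsuit}\mathcal{D}$, via $f\mapsto(\gamma+\mathcal{D}\mapsto\gamma(f))$ for $f\in{}^{\diamondsuit}\mathcal{D}$.
   Context: $Lip_0(X,Y)$ is the Banach space of Lipschitz maps $f:X\to Y$ with $f(0)=0$ and norm $Lip(f)=\sup_{x\neq y}\|f(x)-f(y)\|/\|x-y\|$. For $x\in X$, $\delta_x^Y\in L(Lip_0(X,Y),Y)$ is evaluation $\delta_x^Y(f)=f(x)$. $F_Y(X)$ is the norm-closed linear span of $\{\delta_x^Y:x\in X\}$ in $L(Lip_0(X,Y),Y)$. For $\mathcal{D}\subset F_Y(X)$, ${}^{\diamondsuit}\mathcal{D}=\{f\in Lip_0(X,Y):\gamma(f)=0\ \forall\gamma\in\mathcal{D}\}$, with the norm $Lip(\cdot)$. $F_Y(X)/\mathcal{D}$ carries the quotient norm. *)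

From HB Require Import structures.
From mathcomp Require Import all_boot all_order all_algebra.
From mathcomp Require Import all_classical all_reals all_analysis.
Set Implicit Arguments. Unset Strict Implicit. Unset Printing Implicit Defensive.
Import Order.TTheory GRing.Theory Num.Theory.
Import numFieldNormedType.Exports.
Local Open Scope classical_set_scope.
Local Open Scope ring_scope.

Section LipFree.
Variables (R : realType) (X Y : normedModType R).

Definition lip0 (f : X -> Y) : Prop :=
  f 0 = 0 /\ exists C : R, forall x y, `|f x - f y| <= C * `|x - y|.

Definition lipn (f : X -> Y) : R :=
  sup [set r | exists x y : X, x != y /\ r = `|f x - f y| / `|x - y|].

(* Operators on Lip_0(X,Y) are functions (X -> Y) -> Y; only their values on
   lip0 functions matter. *)
Definition delta (x : X) : (X -> Y) -> Y := fun f => f x.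

Definition opF (g : (X -> Y) -> Y) : R :=
  sup [set `|g f| | f in [set f | lip0 f /\ lipn f <= 1]].

(* gamma belongs to F_Y(X): norm-closure of span{delta_x}, the norm being the
   operator norm  (||gamma - s|| <= eps  <->  ||gamma f - s f|| <= eps Lip f) *)
Definition inF (g : (X -> Y) -> Y) : Prop :=
  forall eps : R, 0 < eps ->
  exists (n : nat) (a : 'I_n -> R) (xs : 'I_n -> X),
    forall f, lip0 f ->
      `|g f - \sum_(i < n) a i *: delta (xs i) f| <= eps * lipn f.

Definition closed_subspaceF (D : set ((X -> Y) -> Y)) : Prop :=
  [/\ forall g, D g -> inF g,
      D (fun _ => 0),
      forall (a : R) g1 g2, D g1 -> D g2 -> D (fun f => a *: g1 f + g2 f)
    & forall g, inF g ->
        (forall eps : R, 0 < eps ->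
           exists d, D d /\ opF (fun f => g f - d f) <= eps) -> D g].

Definition diamond (D : set ((X -> Y) -> Y)) (f : X -> Y) : Prop :=
  lip0 f /\ forall g, D g -> g f = 0.

Definition qnorm (D : set ((X -> Y) -> Y)) (g : (X -> Y) -> Y) : R :=
  inf [set opF (fun f => g f - d f) | d in D].

(* T represents an element of L(F_Y(X)/D, Y): T is given on representatives,
   is constant on cosets, linear and bounded for the quotient norm. *)
Definition LQ (D : set ((X -> Y) -> Y)) (T : ((X -> Y) -> Y) -> Y) : Prop :=
  [/\ forall g1 g2, inF g1 -> inF g2 -> D (fun f => g1 f - g2 f) -> T g1 = T g2,
      forall (a : R) g1 g2, inF g1 -> inF g2 ->
        T (fun f => a *: g1 f + g2 f) = a *: T g1 + T g2
    & exists C : R, forall g, inF g -> `|T g| <= C * qnorm D g].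

Definition opQ (D : set ((X -> Y) -> Y)) (T : ((X -> Y) -> Y) -> Y) : R :=
  sup [set `|T g| | g in [set g | inF g /\ qnorm D g <= 1]].

Definition Phi (f : X -> Y) : ((X -> Y) -> Y) -> Y := fun g => g f.

End LipFree.

From HB Require Import structures.
From mathcomp Require Import all_boot all_order all_algebra.
From mathcomp Require Import all_classical all_reals all_analysis.
Import Order.TTheory GRing.Theory Num.Theory.
Import numFieldNormedType.Exports.
Local Open Scope classical_set_scope.
Local Open Scope ring_scope.

(* Every gamma in F_Y(X) is a limit
   of molecules sum_i a_i delta_{x_i}, hence is linear on Lip_0(X,Y) and
   satisfies |gamma f| <= ||gamma|| Lip(f).  For f annihilating D this bounds
   |gamma f| by Lip(f) times the quotient norm of gamma + D, and the normalized
   molecules (delta_x - delta_y) / |x - y| show that Lip(f) is attained.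
   Conversely, a bounded T on F_Y(X)/D is represented by f x := T (delta_x):
   f is |T|-Lipschitz because ||delta_x - delta_y|| <= |x - y|, T and
   gamma |-> gamma f agree on molecules and hence on F_Y(X), and f kills D
   because T vanishes on D. *)

Set Implicit Arguments. Unset Strict Implicit.

Section RealSup.
Variable R : realType.
Implicit Types (E : set R) (b : R).

(* [0 <= b] replaces the nonemptiness required by [ge_sup], as [sup set0 = 0]. *)
Lemma sup_le_ge0 E b : 0 <= b -> ubound E b -> sup E <= b.
Proof.
move=> b0 Eb; have [->|/set0P E0] := eqVneq E set0; first by rewrite sup0.
exact: ge_sup.
Qed.

Lemma sup_ge0 E : (forall r, E r -> 0 <= r) -> 0 <= sup E.
Proof.
move=> E_ge0; have [->|/set0P [r Er]] := eqVneq E set0; first by rewrite sup0.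
have [Eub|Enub] := pselect (has_ubound E); last by rewrite sup_out // => -[].
exact: le_trans (E_ge0 _ Er) (ub_le_sup Eub Er).
Qed.

Lemma eq_of_norm_le_eps (V : normedModType R) (u v : V) (K : R) :
  (forall eps, 0 < eps -> `|u - v| <= eps * K) -> u = v.
Proof.
move=> uv_small; apply/eqP; rewrite -subr_eq0 -normr_le0.
apply/ler_addgt0Pr => e e_gt0; rewrite add0r.
have K1_gt0 : 0 < `|K| + 1 by rewrite ltr_wpDl.
apply: le_trans (uv_small (e / (`|K| + 1)) _) _; first by rewrite divr_gt0.
rewrite -[leRHS](mulfVK (lt0r_neq0 K1_gt0)); apply: ler_wpM2l.
  by rewrite divr_ge0 ?ltW.
by rewrite ler_wpDr // ler_norm.
Qed.

End RealSup.

Section Lipschitz.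
Variables (R : realType) (X Y : normedModType R).
Implicit Types (f h : X -> Y) (b : R).

Lemma lipn_ge0 f : 0 <= lipn f.
Proof. by apply: sup_ge0 => r [x [y [_ ->]]]; rewrite divr_ge0. Qed.

Lemma lipn_lipschitz f x y : lip0 f -> `|f x - f y| <= lipn f * `|x - y|.
Proof.
move=> [_ [C f_C]]; have [->|xy] := eqVneq x y; first by rewrite !subrr !normr0 mulr0.
have xy_gt0 : 0 < `|x - y| by rewrite normr_gt0 subr_eq0.
rewrite -ler_pdivrMr //; apply: ub_le_sup; last by exists x, y.
exists C => r [x' [y' [x'y' ->]]].
by rewrite ler_pdivrMr ?normr_gt0 ?subr_eq0.
Qed.

Lemma lipn_le f b : 0 <= b -> (forall x y, `|f x - f y| <= b * `|x - y|) ->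
  lipn f <= b.
Proof.
move=> b_ge0 f_b; apply: sup_le_ge0 => // r [x [y [xy ->]]].
by rewrite ler_pdivrMr ?normr_gt0 ?subr_eq0.
Qed.

Lemma lip0_cst0 : lip0 (fun _ : X => 0 : Y).
Proof. by split => //; exists 0 => x y; rewrite subrr normr0 mul0r. Qed.

Lemma lip0_lincomb (c : R) f h : lip0 f -> lip0 h -> lip0 (fun x => c *: f x + h x).
Proof.
move=> [f0 [C1 f_C1]] [h0 [C2 h_C2]]; split; first by rewrite f0 h0 scaler0 addr0.
exists (`|c| * `|C1| + `|C2|) => x y.
rewrite opprD addrACA -scalerBr mulrDl.
apply: le_trans (ler_normD _ _) _; apply: lerD.
  rewrite normrZ -mulrA ler_wpM2l //.
  by apply: le_trans (f_C1 x y) _; rewrite ler_wpM2r // ler_norm.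
by apply: le_trans (h_C2 x y) _; rewrite ler_wpM2r // ler_norm.
Qed.

Lemma lipn_eq0 f : lip0 f -> lipn f = 0 -> f = fun _ => 0.
Proof.
move=> lf f0; apply: funext => x; have := lipn_lipschitz x 0 lf.
by rewrite f0 mul0r lf.1 subr0 normr_le0 => /eqP.
Qed.

Definition mol n (a : 'I_n -> R) (xs : 'I_n -> X) : (X -> Y) -> Y :=
  fun h => \sum_(i < n) a i *: delta (xs i) h.

Lemma inF_mol n a xs : inF (@mol n a xs).
Proof.
move=> eps eps_gt0; exists n, a, xs => f _.
by rewrite subrr normr0 mulr_ge0 ?lipn_ge0 ?ltW.
Qed.

Lemma mol_lincomb n a xs (c : R) f h :
  @mol n a xs (fun x => c *: f x + h x) = c *: mol a xs f + mol a xs h.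
Proof.
rewrite /mol /delta scaler_sumr -big_split /=; apply: eq_bigr => i _.
by rewrite scalerDr !scalerA mulrC.
Qed.

Lemma norm_mol_le n a xs f : lip0 f ->
  `|@mol n a xs f| <= (\sum_(i < n) `|a i| * `|xs i|) * lipn f.
Proof.
move=> lf; rewrite mulr_suml; apply: le_trans (ler_norm_sum _ _ _) _.
apply: ler_sum => i _; rewrite normrZ -mulrA ler_wpM2l //.
by have := lipn_lipschitz (xs i) 0 lf; rewrite lf.1 !subr0 mulrC.
Qed.

Lemma mol_lincomb_closed n1 (a1 : 'I_n1 -> R) xs1 n2 (a2 : 'I_n2 -> R) xs2 (c : R) :
  exists n (a : 'I_n -> R) xs, forall h, mol a xs h = c *: mol a1 xs1 h + mol a2 xs2 h.
Proof.
exists (n1 + n2)%N,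
  (fun i => match fintype.split i with inl j => c * a1 j | inr j => a2 j end),
  (fun i => match fintype.split i with inl j => xs1 j | inr j => xs2 j end) => h.
rewrite /mol big_split_ord /= scaler_sumr; congr (_ + _); apply: eq_bigr => i _.
  by rewrite (unsplitK (inl _ i)) scalerA.
by rewrite (unsplitK (inr _ i)).
Qed.

End Lipschitz.

Arguments lip0_cst0 {R X Y}.
Arguments inF_mol {R X Y n} a xs.
Arguments mol_lincomb_closed {R X Y n1} a1 xs1 {n2} a2 xs2 c.

Lemma subr_lincomb (V : zmodType) (A B C a b : V) :
  A - (B + C) = (A - (a + b)) - ((B - a) + (C - b)).
Proof. by rewrite addrACA -opprD opprB addrA subrK. Qed.

Section FreeSpace.
Variables (R : realType) (X Y : normedModType R).
Implicit Types (f h : X -> Y) (g : (X -> Y) -> Y) (b : R).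

(* Elements of F_Y(X) are operators on all of X -> Y, but on Lip_0(X,Y) they
   inherit linearity from their approximating molecules. *)
Lemma inF_linear g (c : R) f h : inF g -> lip0 f -> lip0 h ->
  g (fun x => c *: f x + h x) = c *: g f + g h.
Proof.
move=> Fg lf lh; have lfh := lip0_lincomb c lf lh.
apply: (@eq_of_norm_le_eps _ _ _ _
  (lipn (fun x => c *: f x + h x) + `|c| * lipn f + lipn h)) => eps eps_gt0.
have [n [a [xs g_mol]]] := Fg eps eps_gt0.
rewrite (subr_lincomb _ _ _ (c *: mol a xs f) (mol a xs h)).
rewrite -mol_lincomb -scalerBr !mulrDr.
apply: le_trans (ler_normB _ _) _; rewrite -addrA; apply: lerD; first exact: g_mol.
apply: le_trans (ler_normD _ _) _; apply: lerD; last exact: g_mol.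
by rewrite normrZ mulrCA ler_wpM2l ?g_mol.
Qed.

Lemma inF_cst0 g : inF g -> g (fun _ => 0) = 0.
Proof.
move=> Fg; have := inF_linear 1 Fg lip0_cst0 lip0_cst0.
rewrite !scale1r (_ : (fun _ => 0 + 0) = fun _ => 0) => [g0E|].
  by apply: (addrI (g (fun _ => 0))); rewrite addr0 -g0E.
by apply: funext => x; rewrite addr0.
Qed.

Lemma inF_bounded g : inF g -> exists b, forall f, lip0 f -> lipn f <= 1 -> `|g f| <= b.
Proof.
move=> Fg; have [n [a [xs g_mol]]] := Fg 1 ltr01.
exists (1 + \sum_(i < n) `|a i| * `|xs i|) => f lf f1.
rewrite -(subrK (mol a xs f) (g f)); apply: le_trans (ler_normD _ _) _.
apply: lerD; first by rewrite -[leRHS]mul1r (le_trans (g_mol f lf)) ?ler_wpM2l.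
apply: le_trans (norm_mol_le a xs lf) _; rewrite -[leRHS]mulr1 ler_wpM2l //.
by rewrite sumr_ge0 // => i _; rewrite mulr_ge0.
Qed.

Lemma opF_ge0 g : 0 <= opF g.
Proof. by apply: sup_ge0 => r [f _ <-]. Qed.

Lemma opF_le g b : 0 <= b -> (forall f, lip0 f -> `|g f| <= b * lipn f) -> opF g <= b.
Proof.
move=> b_ge0 g_b; apply: sup_le_ge0 => // r [f [lf f1] <-].
by apply: le_trans (g_b f lf) _; rewrite -[leRHS]mulr1 ler_wpM2l.
Qed.

Lemma norm_inF_le g f : inF g -> lip0 f -> `|g f| <= opF g * lipn f.
Proof.
move=> Fg lf; have [f0|f_neq0] := eqVneq (lipn f) 0.
  by rewrite f0 mulr0 (lipn_eq0 lf f0) inF_cst0 ?normr0.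
have f_gt0 : 0 < lipn f by rewrite lt_def f_neq0 lipn_ge0.
pose fn x := (lipn f)^-1 *: f x + 0.
have lfn : lip0 fn := lip0_lincomb _ lf lip0_cst0.
have fn1 : lipn fn <= 1.
  apply: lipn_le => // x y; rewrite /fn !addr0 -scalerBr normrZ mul1r.
  by rewrite gtr0_norm ?invr_gt0 // mulrC ler_pdivrMr // mulrC lipn_lipschitz.
have [b g_b] := inF_bounded Fg.
have : `|g fn| <= opF g.
  by apply: ub_le_sup; [exists b => r [h [lh h1] <-]; exact: g_b | exists fn].
rewrite /fn (inF_linear _ Fg lf lip0_cst0) inF_cst0 // addr0 normrZ.
rewrite gtr0_norm ?invr_gt0 //.
by rewrite mulrC ler_pdivrMr.
Qed.

Lemma inF_lincomb g1 g2 (c : R) : inF g1 -> inF g2 -> inF (fun f => c *: g1 f + g2 f).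
Proof.
move=> Fg1 Fg2 eps eps_gt0.
have c1_gt0 : 0 < `|c| + 1 by rewrite ltr_wpDl.
have e1_gt0 : 0 < eps / 2 / (`|c| + 1) by rewrite !divr_gt0.
have e2_gt0 : 0 < eps / 2 by rewrite divr_gt0.
have [n1 [a1 [xs1 g1_mol]]] := Fg1 _ e1_gt0.
have [n2 [a2 [xs2 g2_mol]]] := Fg2 _ e2_gt0.
have [n [a [xs molE]]] := mol_lincomb_closed (Y := Y) a1 xs1 a2 xs2 c.
exists n, a, xs => f lf; have := molE f; rewrite /mol => ->.
rewrite opprD addrACA -scalerBr; apply: le_trans (ler_normD _ _) _.
have := g1_mol f lf; have := g2_mol f lf; have := lipn_ge0 f.
rewrite normrZ; set e1 := eps / 2 / _; set L := lipn f => L_ge0 le2 le1.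
have e1c : `|c| * e1 <= eps / 2.
  by rewrite /e1 mulrC mulrAC ler_pdivrMr // ler_wpM2l ?ler_wpDr // divr_ge0 ?ltW.
apply: le_trans (lerD (ler_wpM2l (normr_ge0 c) le1) le2) _.
rewrite mulrA -mulrDl ler_wpM2r //.
by apply: le_trans (lerD e1c (lexx _)) _; rewrite -splitr.
Qed.

Lemma inF_cst0_fun : inF (fun _ : X -> Y => 0 : Y).
Proof.
by move=> eps eps_gt0; exists 0%N, (fun _ => 0), (fun _ => 0) => f _;
  rewrite big_ord0 subrr normr0 mulr_ge0 ?lipn_ge0 ?ltW.
Qed.

Lemma inF_scale g (c : R) : inF g -> inF (fun f => c *: g f).
Proof.
move=> Fg; have := inF_lincomb c Fg inF_cst0_fun.
by rewrite (_ : (fun f => _) = fun f => c *: g f) //; apply: funext => f; rewrite addr0.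
Qed.

Lemma inF_sub g1 g2 : inF g1 -> inF g2 -> inF (fun f => g1 f - g2 f).
Proof.
move=> Fg1 Fg2; have := inF_lincomb (-1) Fg2 Fg1.
by rewrite (_ : (fun f => _) = fun f => g1 f - g2 f) //; apply: funext => f;
  rewrite scaleN1r addrC.
Qed.

Lemma inF_delta x : inF (@delta _ X Y x).
Proof.
have -> : @delta _ X Y x = mol (fun _ : 'I_1 => 1) (fun _ => x).
  by apply: funext => h; rewrite /mol big_ord1 scale1r.
exact: inF_mol.
Qed.

Lemma opF_delta_sub x y : opF (fun h => delta x h - delta y h) <= `|x - y|.
Proof. by apply: opF_le => // f lf; rewrite mulrC lipn_lipschitz. Qed.

End FreeSpace.

Arguments inF_cst0_fun {R X Y}.
Arguments inF_delta {R X Y} x.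

Section Annihilator.
Variables (R : realType) (X Y : normedModType R) (D : set ((X -> Y) -> Y)).
Hypotheses (D_inF : forall d, D d -> inF d) (D0 : D (fun _ => 0)).
Implicit Types (f h : X -> Y) (g : (X -> Y) -> Y).

Lemma qnorm_ge0 g : 0 <= qnorm D g.
Proof.
apply: lb_le_inf; first by exists (opF (fun f => g f - 0)), (fun _ => 0).
by move=> r [d _ <-]; exact: opF_ge0.
Qed.

Lemma qnorm_le_opF g : qnorm D g <= opF g.
Proof.
have -> : opF g = opF (fun f => g f - 0).
  by congr (opF _); apply: funext => f; rewrite subr0.
by apply: ge_inf; [exists 0 => r [d _ <-]; exact: opF_ge0 | exists (fun _ => 0)].
Qed.

Lemma norm_Phi_le f g : diamond D f -> inF g -> `|Phi f g| <= lipn f * qnorm D g.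
Proof.
move=> [lf f_D] Fg; have [f0|f_neq0] := eqVneq (lipn f) 0.
  by rewrite f0 mul0r /Phi (lipn_eq0 lf f0) inF_cst0 ?normr0.
have f_gt0 : 0 < lipn f by rewrite lt_def f_neq0 lipn_ge0.
rewrite mulrC -ler_pdivrMr //; apply: lb_le_inf.
  by exists (opF (fun h => g h - 0)), (fun _ => 0).
move=> r [d Dd <-]; rewrite ler_pdivrMr //.
have /= := norm_inF_le (inF_sub Fg (D_inF Dd)) lf.
by rewrite (f_D d Dd) subr0.
Qed.

Lemma LQ_Phi f : diamond D f -> LQ D (Phi f).
Proof.
move=> Df; split; [|by []|].
- by move=> g1 g2 _ _ /Df.2/eqP; rewrite subr_eq0 => /eqP.
- by exists (lipn f) => g; exact: norm_Phi_le.
Qed.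

Lemma diamond_lincomb (c : R) f h : diamond D f -> diamond D h ->
  diamond D (fun x => c *: f x + h x).
Proof.
move=> [lf f_D] [lh h_D]; split; first exact: lip0_lincomb.
by move=> d Dd; rewrite (inF_linear c (D_inF Dd) lf lh) f_D // h_D // scaler0 addr0.
Qed.

Lemma opQ_Phi f : diamond D f -> opQ D (Phi f) = lipn f.
Proof.
move=> Df.
have Phi_ub : ubound [set `|Phi f g| | g in [set g | inF g /\ qnorm D g <= 1]] (lipn f).
  move=> _ [g [Fg g1] <-]; apply: le_trans (norm_Phi_le Df Fg) _.
  by rewrite -[leRHS]mulr1 ler_wpM2l ?lipn_ge0.
apply/eqP; rewrite eq_le (sup_le_ge0 (lipn_ge0 f) Phi_ub) /=.
apply: sup_le_ge0; first by apply: sup_ge0 => r [g _ <-].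
move=> _ [x [y [xy ->]]].
have xy_gt0 : 0 < `|x - y| by rewrite normr_gt0 subr_eq0.
pose gxy h := `|x - y|^-1 *: (delta x h - delta y h).
have Fgxy : inF gxy := inF_scale _ (inF_sub (inF_delta x) (inF_delta y)).
have gxy1 : qnorm D gxy <= 1.
  apply: le_trans (qnorm_le_opF _) _; apply: opF_le => // h lh.
  by rewrite normrZ gtr0_norm ?invr_gt0 // mul1r mulrC ler_pdivrMr // lipn_lipschitz.
apply: ub_le_sup; first by exists (lipn f).
exists gxy; first by split.
by rewrite /Phi /gxy /delta normrZ gtr0_norm ?invr_gt0 // mulrC.
Qed.

End Annihilator.

Section Representation.
Variables (R : realType) (X Y : normedModType R) (D : set ((X -> Y) -> Y)).
Variables (T : ((X -> Y) -> Y) -> Y) (C : R).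
Hypotheses (D_inF : forall d, D d -> inF d) (D0 : D (fun _ => 0)).
Hypothesis T_coset : forall g1 g2, inF g1 -> inF g2 ->
  D (fun f => g1 f - g2 f) -> T g1 = T g2.
Hypothesis T_lincomb : forall (a : R) g1 g2, inF g1 -> inF g2 ->
  T (fun f => a *: g1 f + g2 f) = a *: T g1 + T g2.
Hypothesis T_bounded : forall g, inF g -> `|T g| <= C * qnorm D g.

Let fT x := T (delta x).

Lemma T_cst0 : T (fun _ => 0) = 0.
Proof.
have := T_lincomb 1 inF_cst0_fun inF_cst0_fun.
rewrite !scale1r (_ : (fun _ => 0 + 0) = fun _ => 0) => [T0E|].
  by apply: (addrI (T (fun _ => 0))); rewrite addr0 -T0E.
by apply: funext => f; rewrite addr0.
Qed.

Lemma T_sub g1 g2 : inF g1 -> inF g2 -> T (fun f => g1 f - g2 f) = T g1 - T g2.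
Proof.
move=> Fg1 Fg2; rewrite addrC -scaleN1r -T_lincomb //.
by congr T; apply: funext => f; rewrite scaleN1r addrC.
Qed.

Lemma norm_T_le g : inF g -> `|T g| <= `|C| * opF g.
Proof.
move=> Fg; apply: le_trans (T_bounded Fg) _.
apply: le_trans (ler_wpM2r (qnorm_ge0 D0 g) (ler_norm C)) _.
by rewrite ler_wpM2l // qnorm_le_opF.
Qed.

Lemma T_mol n (a : 'I_n -> R) xs : T (mol a xs) = mol a xs fT.
Proof.
elim: n a xs => [|n IHn] a xs.
  rewrite /mol [RHS]big_ord0 -[RHS]T_cst0.
  by congr T; apply/funext => h; rewrite big_ord0.
pose w := widen_ord (leqnSn n).
have -> : mol (Y := Y) a xs =
    fun h => a ord_max *: delta (xs ord_max) h + mol (a \o w) (xs \o w) h.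
  by apply: funext => h; rewrite /mol big_ord_recr addrC.
by rewrite (T_lincomb _ (inF_delta _) (inF_mol _ _)) IHn.
Qed.

Lemma lip0_fT : lip0 fT.
Proof.
split.
  apply/eqP; rewrite -normr_le0; apply: le_trans (norm_T_le (inF_delta 0)) _.
  rewrite -(mulr0 `|C|) ler_wpM2l // opF_le // => h lh.
  by rewrite /delta lh.1 normr0 mul0r.
exists `|C| => x y; rewrite /fT -(T_sub (inF_delta x) (inF_delta y)).
apply: le_trans (norm_T_le (inF_sub (inF_delta x) (inF_delta y))) _.
by rewrite ler_wpM2l // opF_delta_sub.
Qed.

Lemma T_eq_Phi g : inF g -> T g = Phi fT g.
Proof.
move=> Fg; apply: (@eq_of_norm_le_eps _ _ _ _ (`|C| + lipn fT)) => eps eps_gt0.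
have [n [a [xs g_mol]]] := Fg eps eps_gt0.
have -> : T g - Phi fT g = (T g - T (mol a xs)) + (mol a xs fT - g fT).
  by rewrite T_mol addrA subrK.
rewrite mulrDr; apply: le_trans (ler_normD _ _) _; apply: lerD.
  rewrite -(T_sub Fg (inF_mol a xs)).
  apply: le_trans (norm_T_le (inF_sub Fg (inF_mol a xs))) _.
  by rewrite mulrC ler_wpM2r // (opF_le (ltW eps_gt0) g_mol).
by rewrite distrC; apply: g_mol; exact: lip0_fT.
Qed.

Lemma diamond_fT : diamond D fT.
Proof.
split; first exact: lip0_fT.
move=> d Dd; rewrite -[d fT]/(Phi fT d) -(T_eq_Phi (D_inF Dd)) -T_cst0.
apply: T_coset (D_inF Dd) inF_cst0_fun _.
by rewrite (_ : (fun f => d f - 0) = d) //; apply: funext => f; rewrite subr0.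
Qed.

End Representation.

Unset Implicit Arguments.

Theorem mainTheorem14 (R : realType) (X Y : completeNormedModType R)
    (D : set ((X -> Y) -> Y)) :
  closed_subspaceF D ->
  (* Phi maps ^diamond D into L(F_Y(X)/D, Y) *)
  (forall f, diamond D f -> LQ D (Phi f)) /\
  (* linearity of Phi on the subspace ^diamond D *)
  (forall (a : R) f g, diamond D f -> diamond D g ->
     diamond D (fun x => a *: f x + g x) /\
     forall gam, inF gam ->
       Phi (fun x => a *: f x + g x) gam = a *: Phi f gam + Phi g gam) /\
  (* isometry *)
  (forall f, diamond D f -> opQ D (Phi f) = lipn f) /\
  (* injectivity *)
  (forall f g, diamond D f -> diamond D g ->
     (forall gam, inF gam -> Phi f gam = Phi g gam) -> f = g) /\
  (* surjectivity *)
  (forall T, LQ D T ->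
     exists f, diamond D f /\ forall gam, inF gam -> T gam = Phi f gam).
Proof.
move=> [D_inF D0 _ _]; split; first by move=> f; exact: LQ_Phi.
split.
  move=> a f g Df Dg; split; first exact: diamond_lincomb.
  by move=> gam Fgam; rewrite /Phi (inF_linear a Fgam Df.1 Dg.1).
split; first by move=> f; exact: opQ_Phi.
split.
  by move=> f g _ _ fg; apply: funext => x; exact: fg _ (inF_delta x).
move=> T [T_coset T_lincomb [C T_bounded]].
exists (fun x => T (delta x)); split.
  exact: diamond_fT T_coset T_lincomb T_bounded.
exact: T_eq_Phi T_lincomb T_bounded.
Qed.
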